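(* Let $P=\{x\in\mathbb R^n : Ax=b,\ x\ge 0\}$ be a polyhedron in standard form. Then the cone $$C_A=\{(y^+,y^-)\in\mathbb R^{2n} : A(y^+-y^-)=0,\ y^+,y^-\ge 0\}$$ is pointed and is generated by a set of extreme rays $S\cup T'$, where: (1) $S:=\{(y^+,y^-) : y^+_i=\max\{g_i,0\},\ y^-_i=\max\{-g_i,0\}\ (i\le n),\ g\in\mathcal C(A)\}$ (these give the circuits of $P$); (2) $T'$ is a subset of $T:=\{(y^+,y^-) : \text{for some } i\le n,\ y^+_i=y^-_i=1,\ y^+_j=y^-_j=0\ (j\ne i)\}$ with $|T'|\le n$. That is, the extreme rays of $C_A$ are exactly the rays spanned by the elements of $S\cup T'$.
   Context: $\mathcal C(A)$ denotes the set of circuits of the standard form polyhedron: all $g\in\ker(A)\setminus\{0\}$, normalized to coprime integer components, that are support-minimal in $\ker(A)\setminus\{0\}$ (no $x\in\ker(A)\setminus\{0\}$ has $\operatorname{supp}(x)\subsetneq\operatorname{supp}(g)$). *)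

From HB Require Import structures.
From mathcomp Require Import all_boot all_order all_algebra.
From mathcomp Require Import reals.
Set Implicit Arguments. Unset Strict Implicit. Unset Printing Implicit Defensive.
Import Order.TTheory GRing.Theory Num.Theory.
Local Open Scope ring_scope.

Section Defs.
Variables (R : realType) (m n : nat).

Definition realmx (A : 'M[rat]_(m, n)) : 'M[R]_(m, n) := map_mx ratr A.

Definition supp (x : 'cV[R]_n) : {set 'I_n} := [set i | x i 0 != 0].

Definition intvec (g : 'cV[int]_n) : 'cV[R]_n := map_mx (fun z : int => z%:~R) g.

Definition is_circuit (A : 'M[rat]_(m, n)) (g : 'cV[int]_n) : Prop :=
  [/\ g != 0,
      realmx A *m intvec g = 0,
      (forall d : int, (forall i, (d %| g i ord0)%Z) -> `|d| = 1) &
      (forall x : 'cV[R]_n, realmx A *m x = 0 -> x != 0 ->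
         ~ (supp x \proper supp (intvec g)))].

(* the cone C_A in R^{2n}; a vector y is split as (y^+, y^-) = (usubmx y, dsubmx y) *)
Definition CA (A : 'M[rat]_(m, n)) (y : 'cV[R]_(n + n)) : Prop :=
  [/\ realmx A *m (usubmx y - dsubmx y) = 0,
      (forall i, 0 <= usubmx y i 0) &
      (forall i, 0 <= dsubmx y i 0)].

Definition pointed (C : 'cV[R]_(n + n) -> Prop) : Prop :=
  forall y, C y -> C (- y) -> y = 0.

Definition extreme_dir (C : 'cV[R]_(n + n) -> Prop) (d : 'cV[R]_(n + n)) : Prop :=
  [/\ d != 0, C d &
      forall u v, C u -> C v -> u + v = d ->
        exists a b : R, [/\ 0 <= a, 0 <= b, u = a *: d & v = b *: d]].

Definition cone_generated_by (C G : 'cV[R]_(n + n) -> Prop) : Prop :=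
  forall y, C y -> exists k (d : 'I_k -> 'cV[R]_(n + n)) (c : 'I_k -> R),
    [/\ forall j, G (d j), forall j, 0 <= c j & y = \sum_(j < k) c j *: d j].

Definition Svec (A : 'M[rat]_(m, n)) (y : 'cV[R]_(n + n)) : Prop :=
  exists g, is_circuit A g /\
    y = col_mx (\col_i Num.max (intvec g i 0) 0) (\col_i Num.max (- intvec g i 0) 0).

Definition tvec (i : 'I_n) : 'cV[R]_(n + n) :=
  col_mx (\col_j (j == i)%:R) (\col_j (j == i)%:R).

End Defs.

From Pilot Require Import Defs.
From HB Require Import structures.
From mathcomp Require Import all_boot all_order all_algebra.
From mathcomp Require Import boolp reals.
Import Order.TTheory GRing.Theory Num.Theory.
Local Open Scope ring_scope.
Set Implicit Arguments. Unset Strict Implicit. Unset Printing Implicit Defensive.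

(** C_A is the cone {y >= 0 : M y = 0} for M = A [1 -1], so it lies in the
    nonnegative orthant and is pointed.  In such a cone the extreme rays are
    exactly the nonzero elements of minimal support, and every element is a
    nonnegative combination of them: subtracting the largest multiple of an
    element of smaller support that keeps y >= 0 (the ratio test of the simplex
    method) strictly shrinks the support.  A support-minimal y = (y^+, y^-)
    either has y^+_i, y^-_i <> 0 for some i, and then it is a multiple of
    (e_i, e_i) in T (which lies in C_A), with A e_i <> 0 since otherwise
    (e_i, 0) would be a second kernel vector supported in supp y; or y^+ and y^-
    have disjoint supports, and then x = y^+ - y^- is support-minimal in ker A,
    hence a positive multiple of a circuit because A is rational. *)

Section Supports.
Variable R : realType.

Lemma subset_suppP k (y z : 'cV[R]_k) :
  reflect (forall i, y i 0 = 0 -> z i 0 = 0) (supp z \subset supp y).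
Proof.
apply: (iffP subsetP) => sub i; rewrite ?inE.
  by move=> /eqP; apply: contraTeq => zi; have := sub i; rewrite !inE; apply.
by apply: contraNN => /eqP /sub ->.
Qed.

Lemma suppZ k (c : R) (y : 'cV[R]_k) : c != 0 -> supp (c *: y) = supp y.
Proof. by move=> c0; apply/setP=> i; rewrite !inE mxE mulf_eq0 negb_or c0. Qed.

Lemma suppN k (y : 'cV[R]_k) : supp (- y) = supp y.
Proof. by apply/setP=> i; rewrite !inE mxE oppr_eq0. Qed.

Lemma supp_neq0 k (y : 'cV[R]_k) : y != 0 -> exists i, i \in supp y.
Proof. by case/matrix0Pn=> i [j]; rewrite (ord1 j) => yi; exists i; rewrite inE. Qed.

Definition supp_minimal k (C : 'cV[R]_k -> Prop) (y : 'cV[R]_k) : Prop :=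
  [/\ C y, y != 0 & forall z, C z -> z != 0 -> ~ supp z \proper supp y].

Lemma supp_minimal_sub k (C D : 'cV[R]_k -> Prop) y :
  (forall z, C z -> D z) -> C y -> supp_minimal D y -> supp_minimal C y.
Proof. by move=> CD Cy [_ y0 minD]; split=> // z /CD; apply: minD. Qed.

Definition indecomposable k (C : 'cV[R]_k -> Prop) (d : 'cV[R]_k) : Prop :=
  forall u v, C u -> C v -> u + v = d ->
    exists a b : R, [/\ 0 <= a, 0 <= b, u = a *: d & v = b *: d].

End Supports.

Section KernelCone.
Variables (R : realType) (p k : nat) (M : 'M[R]_(p, k)).

Local Notation kerM := (fun v : 'cV[R]_k => M *m v = 0).

Lemma supp_minimal_ker_multiple x v :
  supp_minimal kerM x -> M *m v = 0 -> supp v \subset supp x -> exists c, v = c *: x.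
Proof.
move=> [Mx _ minx] Mv svx.
have [->|v0] := eqVneq v 0; first by exists 0; rewrite scale0r.
have [i vi] := supp_neq0 v0.
have xi : x i 0 != 0 by have := subsetP svx i vi; rewrite inE.
exists (v i 0 / x i 0); apply/eqP; rewrite -subr_eq0; apply/negPn/negP => w0.
apply: (minx _ _ w0); first by rewrite mulmxBr Mv -scalemxAr Mx scaler0 subr0.
apply/properP; split.
  apply/subset_suppP => j xj; rewrite !mxE xj mulr0 subr0.
  exact: (subset_suppP _ _ svx).
by exists i; rewrite inE // !mxE divfK // subrr eqxx.
Qed.

Lemma supp_minimal_kerP x : M *m x = 0 -> x != 0 ->
  supp_minimal kerM x <->
  (forall v, M *m v = 0 -> supp v \subset supp x -> exists c, v = c *: x).
Proof.
move=> Mx x0; split=> [minx v|mult]; first exact: supp_minimal_ker_multiple.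
split=> // v Mv v0 pvx.
have [c vE] := mult v Mv (proper_sub pvx).
have c0 : c != 0 by apply: contraNneq v0 => c0; rewrite vE c0 scale0r.
by move: pvx; rewrite vE suppZ // properxx.
Qed.

Definition kercone (y : 'cV[R]_k) : Prop := M *m y = 0 /\ forall i, 0 <= y i 0.

Lemma kerconeZ c y : 0 <= c -> kercone y -> kercone (c *: y).
Proof.
by move=> c0 [My y0]; split=> [|i]; rewrite ?mxE ?mulr_ge0 // -scalemxAr My scaler0.
Qed.

Lemma kercone_pointed y : kercone y -> kercone (- y) -> y = 0.
Proof.
move=> [_ y0] [_ Ny0]; apply/matrixP=> i j; rewrite (ord1 j) mxE.
by apply/le_anti; rewrite y0 andbT -oppr_ge0; have := Ny0 i; rewrite mxE.
Qed.

Lemma kercone_step y z : kercone y -> M *m z = 0 -> (exists i, 0 < z i 0) ->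
  supp z \subset supp y ->
  exists2 mu, 0 < mu & kercone (y - mu *: z) /\ supp (y - mu *: z) \proper supp y.
Proof.
move=> [My y_ge0] Mz [i0 zi0] /subset_suppP zy.
case: (@arg_minP _ _ _ i0 [pred i | 0 < z i 0] (fun i => y i 0 / z i 0) zi0)
  => i /= zi min_i.
have yi : 0 < y i 0.
  by rewrite lt_def y_ge0 andbT; apply: contra_neq (lt0r_neq0 zi); apply: zy.
have mu0 : 0 < y i 0 / z i 0 by rewrite divr_gt0.
exists (y i 0 / z i 0) => //; split; [split=> [|j]|].
- by rewrite mulmxBr My -scalemxAr Mz scaler0 subr0.
- rewrite !mxE subr_ge0; case: (ltrP 0 (z j 0)) => zj.
    by rewrite -ler_pdivlMr // min_i.
  by apply: le_trans (y_ge0 j); rewrite mulr_ge0_le0 // ltW.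
- apply/properP; split.
    apply/subset_suppP => j yj; rewrite !mxE yj.
    by rewrite (zy j yj) mulr0 subr0.
  exists i; first by rewrite inE gt_eqF.
  by rewrite inE !mxE divfK ?subrr ?eqxx ?lt0r_neq0.
Qed.

Lemma kercone_pos_entry z : kercone z -> z != 0 -> exists i, 0 < z i 0.
Proof.
by move=> [_ z_ge0] /supp_neq0 [i]; rewrite inE => zi; exists i; rewrite lt_def zi z_ge0.
Qed.

Lemma supp_minimal_kercone_ker y :
  kercone y -> supp_minimal kercone y <-> supp_minimal kerM y.
Proof.
move=> Cy; split=> [[_ y0 minC]|]; last by apply: supp_minimal_sub Cy => z [].
split=> [|//|v Mv v0 pvy]; first by case: Cy.
have [w [Mw [i wi] sw]] :
    exists w, [/\ M *m w = 0, exists i, 0 < w i 0 & supp w = supp v].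
  have [i] := supp_neq0 v0; rewrite inE => vi.
  case: (ltrP 0 (v i 0)) => vi_sign; first by exists v; split=> //; exists i.
  exists (- v); split; [by rewrite mulmxN Mv oppr0 | exists i | exact: suppN].
  by rewrite mxE oppr_gt0 lt_neqAle vi vi_sign.
rewrite -sw in pvy.
have [mu mu0 [Cw pw]] := kercone_step Cy Mw (ex_intro _ i wi) (proper_sub pvy).
have /eqP : y - mu *: w = 0 by apply/eqP/negPn/negP => w0; apply: minC Cw w0 pw.
by rewrite subr_eq0 => /eqP yE; move: pvy; rewrite yE suppZ ?gt_eqF // properxx.
Qed.

Lemma supp_minimal_kercone_multiple y z :
  supp_minimal kercone y -> kercone z -> supp z \subset supp y ->
  exists2 c, 0 <= c & z = c *: y.
Proof.
move=> miny Cz szy; have [Cy y0 _] := miny.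
have [c zE] := supp_minimal_ker_multiple ((supp_minimal_kercone_ker Cy).1 miny) Cz.1 szy.
exists c => //; have [i] := supp_neq0 y0; rewrite inE => yi.
have yi_pos : 0 < y i 0 by rewrite lt_def yi Cy.2.
by have := Cz.2 i; rewrite zE mxE pmulr_lge0.
Qed.

Lemma supp_minimal_kerconeP y :
  supp_minimal kercone y <-> [/\ y != 0, kercone y & indecomposable kercone y].
Proof.
split=> [miny|[y0 Cy indec]].
  have [Cy y0 _] := miny; split=> // u v Cu Cv uvy.
  have [su sv] : supp u \subset supp y /\ supp v \subset supp y.
    split; apply/subset_suppP => j; rewrite -uvy mxE => /eqP;
      by rewrite paddr_eq0 ?Cu.2 ?Cv.2 // => /andP [/eqP ? /eqP ?].
  have [a a0 ->] := supp_minimal_kercone_multiple miny Cu su.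
  by have [b b0 ->] := supp_minimal_kercone_multiple miny Cv sv; exists a, b.
split=> // z Cz z0 pzy.
have [mu mu0 [Cw _]] := kercone_step Cy Cz.1 (kercone_pos_entry Cz z0) (proper_sub pzy).
have [_ [b [_ _ _ zE]]] := indec _ _ Cw (kerconeZ (ltW mu0) Cz) (subrK _ _).
have b0 : b != 0.
  by apply: contraNneq z0 => b0; move/eqP: zE; rewrite b0 scale0r scaler_eq0 gt_eqF.
by move: pzy; rewrite -(suppZ z (lt0r_neq0 mu0)) zE suppZ // properxx.
Qed.

Lemma kercone_decomposition (G : 'cV[R]_k -> Prop) :
  (forall y, supp_minimal kercone y -> exists w, G w /\ exists2 t, 0 < t & y = t *: w) ->
  forall y, kercone y ->
  exists s : seq (R * 'cV[R]_k),
    (forall q, q \in s -> 0 <= q.1 /\ G q.2) /\ y = \sum_(q <- s) q.1 *: q.2.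
Proof.
move=> minG y; move: {2}#|supp y|.+1 (ltnSn #|supp y|) => N.
elim: N y => // N IH y ltyN Cy.
have [->|y0] := eqVneq y 0; first by exists [::]; rewrite big_nil.
have [[z [Cz z0 pzy]]|nosub] :=
  pselect (exists z, [/\ kercone z, z != 0 & supp z \proper supp y]); last first.
  have [|w [Gw [t t0 ->]]] := minG y.
    by split=> // z Cz z0 pzy; apply: nosub; exists z.
  exists [:: (t, w)]; split; last by rewrite big_seq1.
  by move=> q; rewrite inE => /eqP -> /=; rewrite ltW.
have [mu mu0 [Cw pw]] := kercone_step Cy Cz.1 (kercone_pos_entry Cz z0) (proper_sub pzy).
have [s1 [s1G wE]] := IH _ (leq_trans (proper_card pw) ltyN) Cw.
have [s2 [s2G zE]] := IH _ (leq_trans (proper_card pzy) ltyN) Cz.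
exists (s1 ++ [seq (mu * q.1, q.2) | q <- s2]); split.
  move=> q; rewrite mem_cat => /orP [/s1G //|/mapP [q' /s2G [q'0 ?] ->]].
  by rewrite mulr_ge0 // ltW.
rewrite big_cat big_map -wE /=.
by under eq_bigr do rewrite -scalerA; rewrite -scaler_sumr -zE subrK.
Qed.

End KernelCone.

Lemma map_ker_supp (F K : fieldType) (f : {rmorphism F -> K}) p k
    (A : 'M[F]_(p, k)) (x : 'cV[K]_k) :
  map_mx f A *m x = 0 -> x != 0 ->
  exists2 q : 'cV[F]_k, q != 0 & A *m q = 0 /\ forall j, x j 0 = 0 -> q j 0 = 0.
Proof.
move=> Ax x0.
(* x stays in the kernel when the rows e_j, x_j = 0, are appended to A, and a
   kernel that is nontrivial over K is nontrivial over F. *)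
pose N := col_mx A (diag_mx (\row_j ((x j 0 == 0)%:R : F))).
have Nx : map_mx f N *m x = 0.
  rewrite map_col_mx mul_col_mx Ax map_diag_mx; apply/eqP; rewrite col_mx_eq0 eqxx /=.
  apply/eqP/matrixP => i j; rewrite (ord1 j) mul_diag_mx !mxE rmorph_nat.
  by case: eqVneq => [->|_]; rewrite ?mulr0 ?mul0r.
have : kermx N^T != 0.
  rewrite kermx_eq0 -(row_free_map f) -map_trmx; apply/negP => freeN.
  move: x0; rewrite -trmx_eq0 -(mulmx_free_eq0 _ freeN) -trmx_mul Nx trmx0.
  by rewrite eqxx.
case/matrix0Pn => r [c rc]; pose q := (row r (kermx N^T))^T.
have /eqP : N *m q = 0.
  by apply: trmx_inj; rewrite trmx_mul trmxK -row_mul mulmx_ker trmx0 row0.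
rewrite mul_col_mx col_mx_eq0 => /andP [/eqP Aq /eqP /matrixP Dq].
exists q; first by apply/matrix0Pn; exists c, 0; rewrite 2!mxE.
by split=> // j xj; have := Dq j 0; rewrite mul_diag_mx !mxE xj eqxx mul1r.
Qed.

Lemma rat_vec_primitive_scale k (q : 'cV[rat]_k) : q != 0 ->
  exists (g : 'cV[int]_k) (l : rat),
    [/\ g != 0, l != 0, forall j, (g j 0)%:~R = l * q j 0 &
        forall d : int, (forall i, (d %| g i ord0)%Z) -> `|d| = 1].
Proof.
case: k q => [|k] q q0; first by rewrite flatmx0 eqxx in q0.
(* Packing the coordinates into a polynomial gives access to [zprimitive]. *)
pose pq : {poly rat} := \poly_(i < k.+1) q (inord i) 0.
have pqE (j : 'I_k.+1) : pq`_j = q j 0 by rewrite coef_poly ltn_ord inord_val.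
have [pz [a a0 pqz]] := rat_poly_scale pq.
have pz0 : pz != 0.
  apply: contraNneq q0 => pz0; apply/eqP/matrixP => j i; rewrite (ord1 i) mxE.
  by rewrite -pqE pqz pz0 rmorph0 scaler0 coef0.
pose g : {poly int} := zprimitive pz; pose l : rat := a%:~R / (zcontents pz)%:~R.
have l0 : l != 0 by rewrite mulf_neq0 ?invr_eq0 ?intr_eq0 ?zcontents_eq0.
have gE i : (g`_i)%:~R = l * pq`_i.
  rewrite pqz coefZ coef_map /= [in RHS](zpolyEprim pz) coefZ intrM /l.
  by rewrite mulrCA !mulrA divfK ?intr_eq0 ?zcontents_eq0 // mulVf ?intr_eq0 ?mul1r.
have gqE j : ((\col_(i < k.+1) g`_i) j 0)%:~R = l * q j 0 by rewrite mxE gE pqE.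
exists (\col_i g`_i), l; split=> //; last move=> d dg.
  case/matrix0Pn: q0 => j [i]; rewrite (ord1 i) => qj.
  by apply/matrix0Pn; exists j, 0; rewrite -(intr_eq0 rat) gqE mulf_neq0.
have : (d %| zcontents g)%Z.
  rewrite dvdz_contents; apply/polyOverP => i.
  have [ik|ki] := ltnP i k.+1; first by have := dg (Ordinal ik); rewrite mxE.
  suff -> : g`_i = 0 by apply: dvdz0.
  by apply/eqP; rewrite -(intr_eq0 rat) gE coef_poly ltnNge ki mulr0.
by rewrite zcontents_primitive pz0 dvdz1 -abszE => /eqP ->.
Qed.

Section StandardFormCone.
Variables (R : realType) (m n : nat) (A : 'M[rat]_(m, n)).

(* a bare [realmx] would be MathComp's notation for [mxOver Num.real] *)
Local Notation AR := (Defs.realmx R A).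

Definition diffmx : 'M[R]_(n, n + n) := row_mx 1%:M (- 1%:M).

Local Notation AD := (AR *m diffmx).

Lemma diffmxE (y : 'cV[R]_(n + n)) : diffmx *m y = usubmx y - dsubmx y.
Proof. by rewrite -{1}[y]vsubmxK mul_row_col !mul1mx mulNmx mul1mx. Qed.

Lemma diffmx_entry (y : 'cV[R]_(n + n)) j :
  (diffmx *m y) j 0 = y (lshift n j) 0 - y (rshift n j) 0.
Proof. by rewrite diffmxE !mxE. Qed.

Lemma CA_kercone : CA A = kercone AD.
Proof.
apply/funext => y; apply/propext; rewrite /CA /kercone -mulmxA diffmxE.
split=> [[Ay yu yd]|[Ay y_ge0]]; last by split=> // i; rewrite mxE.
by split=> // k; case: (split_ordP k) => j ->; [have := yu j | have := yd j]; rewrite mxE.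
Qed.

Definition posneg (x : 'cV[R]_n) : 'cV[R]_(n + n) :=
  col_mx (\col_i Num.max (x i 0) 0) (\col_i Num.max (- x i 0) 0).

Lemma posneg_lshift x j : posneg x (lshift n j) 0 = Num.max (x j 0) 0.
Proof. by rewrite col_mxEu mxE. Qed.

Lemma posneg_rshift x j : posneg x (rshift n j) 0 = Num.max (- x j 0) 0.
Proof. by rewrite col_mxEd mxE. Qed.

Lemma max0_subN (a : R) : Num.max a 0 - Num.max (- a) 0 = a.
Proof.
have [a0|a0] := lerP 0 a; first by rewrite (max_idPr _) ?subr0 // oppr_le0.
by rewrite (max_idPl _) ?sub0r ?opprK // oppr_ge0 ltW.
Qed.

Lemma posnegK x : diffmx *m posneg x = x.
Proof.
apply/matrixP => j i.
by rewrite (ord1 i) diffmx_entry posneg_lshift posneg_rshift max0_subN.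
Qed.

Lemma posneg_eq0 x : (posneg x == 0) = (x == 0).
Proof.
apply/eqP/eqP => [x0|->]; first by rewrite -(posnegK x) x0 mulmx0.
apply/matrixP => k i; rewrite (ord1 i).
by case: (split_ordP k) => j ->; rewrite ?posneg_lshift ?posneg_rshift !mxE ?oppr0 maxxx.
Qed.

Lemma posnegZ t x : 0 <= t -> posneg (t *: x) = t *: posneg x.
Proof.
move=> t0; apply/matrixP => k i; rewrite (ord1 i) [RHS]mxE.
by case: (split_ordP k) => j ->;
  rewrite ?posneg_lshift ?posneg_rshift mxE -?mulrN maxr_pMr ?mulr0.
Qed.

Lemma kercone_posneg x : AR *m x = 0 -> kercone AD (posneg x).
Proof.
move=> Ax; split=> [|k]; first by rewrite -mulmxA posnegK.
by case: (split_ordP k) => j ->; rewrite ?posneg_lshift ?posneg_rshift le_max lexx orbT.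
Qed.

Lemma posneg_diffmx (y : 'cV[R]_(n + n)) : (forall k, 0 <= y k 0) ->
  (forall j, y (lshift n j) 0 = 0 \/ y (rshift n j) 0 = 0) -> posneg (diffmx *m y) = y.
Proof.
move=> y_ge0 y_conf; apply/matrixP => k i; rewrite (ord1 i).
case: (split_ordP k) => j ->; rewrite ?posneg_lshift ?posneg_rshift diffmx_entry;
  case: (y_conf j) => ->; rewrite ?subr0 ?sub0r ?opprK ?oppr0 //;
  by [apply/max_idPl | apply/max_idPr; rewrite ?oppr_le0].
Qed.

Lemma supp_diffmx (u : 'cV[R]_(n + n)) x :
  supp u \subset supp (posneg x) -> supp (diffmx *m u) \subset supp x.
Proof.
move/subset_suppP => ux; apply/subset_suppP => j xj.
by rewrite diffmx_entry !ux ?subrr // ?posneg_lshift ?posneg_rshift xj ?oppr0 maxxx.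
Qed.

Lemma posneg_supp_multiple (u : 'cV[R]_(n + n)) x c :
  supp u \subset supp (posneg x) -> diffmx *m u = c *: x -> u = c *: posneg x.
Proof.
move=> /subset_suppP ux /matrixP /(_ _ 0) uxc.
apply/matrixP => k i; rewrite (ord1 i) mxE.
case: (split_ordP k) => j ->; rewrite ?posneg_lshift ?posneg_rshift;
  have := uxc j; rewrite diffmx_entry mxE.
- have [xj|xj] := lerP (x j 0) 0.
    by rewrite mulr0 ux // posneg_lshift; apply/max_idPr.
  rewrite (ux (rshift n j)) ?subr0 // posneg_rshift.
  by apply/max_idPr; rewrite oppr_le0 ltW.
- have [xj|xj] := lerP 0 (x j 0).
    rewrite (max_idPr _) ?oppr_le0 // mulr0 (ux (rshift n j)) // posneg_rshift.
    by apply/max_idPr; rewrite oppr_le0.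
  rewrite (max_idPl _) ?oppr_ge0 ?ltW // (ux (lshift n j)) ?sub0r => [h|].
    by rewrite mulrN -h opprK.
  by rewrite posneg_lshift; apply/max_idPr; rewrite ltW.
Qed.

Lemma diffmx_lift w x : supp w \subset supp x ->
  exists2 u, diffmx *m u = w & supp u \subset supp (posneg x).
Proof.
move/subset_suppP => wx; pose r j := w j 0 / x j 0.
exists (col_mx (\col_j (Num.max (x j 0) 0 * r j)) (\col_j (Num.max (- x j 0) 0 * r j))).
  apply/matrixP => j i; rewrite (ord1 i) diffmx_entry col_mxEu col_mxEd !mxE.
  rewrite -mulrBl max0_subN /r; have [xj|xj] := eqVneq (x j 0) 0.
    by rewrite wx // xj mul0r.
  by rewrite mulrCA divff // mulr1.
apply/subset_suppP => k; case: (split_ordP k) => j ->;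
  by rewrite ?posneg_lshift ?posneg_rshift ?col_mxEu ?col_mxEd mxE => ->; rewrite mul0r.
Qed.

Local Notation kerAR := (fun v : 'cV[R]_n => AR *m v = 0).
Local Notation kerAD := (fun u : 'cV[R]_(n + n) => AD *m u = 0).

Lemma supp_minimal_posneg x : AR *m x = 0 ->
  supp_minimal kerAR x <-> supp_minimal kerAD (posneg x).
Proof.
move=> ARx; have ADx : AD *m posneg x = 0 by rewrite -mulmxA posnegK.
split=> minx.
  have [_ x0 _] := minx; apply/(supp_minimal_kerP ADx); first by rewrite posneg_eq0.
  move=> u ADu /[dup] ux /supp_diffmx dux.
  have [|c uxc] := supp_minimal_ker_multiple minx _ dux; first by rewrite mulmxA.
  by exists c; apply: posneg_supp_multiple.
have [_ + _] := minx; rewrite posneg_eq0 => x0.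
apply/(supp_minimal_kerP ARx x0) => w ARw /diffmx_lift [u uw ux].
have [|c uxc] := supp_minimal_ker_multiple minx _ ux; first by rewrite -mulmxA uw.
by exists c; rewrite -uw uxc -scalemxAr posnegK.
Qed.

Lemma intvecN (g : 'cV[int]_n) : intvec R (- g) = - intvec R g.
Proof. by apply/matrixP => i j; rewrite !mxE intrN. Qed.

Lemma intvec_neq0 (g : 'cV[int]_n) : g != 0 -> intvec R g != 0.
Proof.
by case/matrix0Pn => i [j gij]; apply/matrix0Pn; exists i, j; rewrite mxE intr_eq0.
Qed.

Lemma is_circuitN g : is_circuit R A g -> is_circuit R A (- g).
Proof.
case=> g0 ARg prim ming; split.
- by rewrite oppr_eq0.
- by rewrite intvecN mulmxN ARg oppr0.
- by move=> d dg; apply: prim => i; have := dg i; rewrite mxE dvdzE abszN.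
- by rewrite intvecN suppN.
Qed.

Lemma circuit_supp_minimal g : is_circuit R A g -> supp_minimal kerAR (intvec R g).
Proof. by case=> g0 ARg _ ming; split=> //; apply: intvec_neq0. Qed.

Lemma supp_minimal_circuit x : supp_minimal kerAR x ->
  exists g (t : R), [/\ is_circuit R A g, 0 < t & x = t *: intvec R g].
Proof.
move=> minx; have [ARx x0 minx'] := minx.
have [q q0 [Aq xq]] := map_ker_supp ARx x0.
have [g [l [g0 l0 gqE prim]]] := rat_vec_primitive_scale q0.
have gE : intvec R g = ratr l *: map_mx ratr q.
  by apply/matrixP => i j; rewrite (ord1 j) !mxE -ratr_int gqE rmorphM.
have ARg : AR *m intvec R g = 0.
  by rewrite gE -scalemxAr -map_mxM Aq map_mx0 scaler0.
have gx : supp (intvec R g) \subset supp x.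
  by apply/subset_suppP => j xj; rewrite gE !mxE xq // rmorph0 mulr0.
have [c gxc] := supp_minimal_ker_multiple minx ARg gx.
have c0 : c != 0.
  by apply: contraNneq (intvec_neq0 g0) => c0; rewrite gxc c0 scale0r.
have xE : x = c^-1 *: intvec R g by rewrite gxc scalerA mulVf ?scale1r.
have gA : is_circuit R A g by split=> // v ARv v0; rewrite gxc suppZ //; apply: minx'.
have [c_pos|c_neg] := ltrP 0 c; first by exists g, c^-1; rewrite invr_gt0.
exists (- g), (- c^-1); split; first exact: is_circuitN.
  by rewrite oppr_gt0 invr_lt0 lt_neqAle c0.
by rewrite intvecN scalerN scaleNr opprK.
Qed.

Lemma tvecE i : tvec R i = col_mx (delta_mx i 0 : 'cV_n) (delta_mx i 0).
Proof.
by rewrite /tvec; congr col_mx; apply/matrixP => j k; rewrite (ord1 k) !mxE andbT.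
Qed.

Lemma tvec_lshift i j : tvec R i (lshift n j) 0 = (j == i)%:R.
Proof. by rewrite tvecE col_mxEu mxE andbT. Qed.

Lemma tvec_rshift i j : tvec R i (rshift n j) 0 = (j == i)%:R.
Proof. by rewrite tvecE col_mxEd mxE andbT. Qed.

Lemma tvec_neq0 (i : 'I_n) : tvec R i != 0.
Proof.
apply/eqP => /matrixP /(_ (lshift n i) 0).
by rewrite tvec_lshift eqxx mxE => /eqP; rewrite oner_eq0.
Qed.

Lemma kercone_tvec i : kercone AD (tvec R i).
Proof.
split=> [|k]; first by rewrite -mulmxA diffmxE tvecE col_mxKu col_mxKd subrr mulmx0.
by case: (split_ordP k) => j ->; rewrite ?tvec_lshift ?tvec_rshift ler0n.
Qed.

Lemma col_realmx_eq0 i : (col i AR == 0) = (col i A == 0).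
Proof. by rewrite /Defs.realmx -map_col map_mx_eq0. Qed.

Lemma tvec_supp_minimal i : col i A != 0 -> supp_minimal (kercone AD) (tvec R i).
Proof.
move=> Ai; have Ci := kercone_tvec i.
apply/(supp_minimal_kercone_ker Ci)/(supp_minimal_kerP Ci.1 (tvec_neq0 i)).
move=> v ADv /subset_suppP vi.
set a := v (lshift n i) 0; set b := v (rshift n i) 0.
have vE : v = col_mx (a *: delta_mx i 0) (b *: delta_mx i 0).
  apply/matrixP => k l; rewrite (ord1 l).
  case: (split_ordP k) => j ->; rewrite ?col_mxEu ?col_mxEd !mxE eqxx andbT;
    have [->|ji] := eqVneq j i; rewrite ?mulr1 ?mulr0 // vi //;
    by rewrite ?tvec_lshift ?tvec_rshift (negbTE ji).
have ab : a = b.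
  move: ADv; rewrite vE -mulmxA diffmxE col_mxKu col_mxKd -scalerBl -scalemxAr -colE.
  by move/eqP; rewrite scaler_eq0 subr_eq0 col_realmx_eq0 (negbTE Ai) orbF => /eqP.
by exists a; rewrite vE ab tvecE scale_col_mx.
Qed.

Lemma supp_minimal_two_sided_col y i : supp_minimal (kercone AD) y ->
  y (lshift n i) 0 != 0 -> y (rshift n i) 0 != 0 -> col i A != 0.
Proof.
move=> miny yl yr; have [Cy _ _] := miny; apply/negP => /eqP Ai0.
pose z : 'cV[R]_(n + n) := col_mx (delta_mx i 0) 0.
have ADz : AD *m z = 0.
  rewrite -mulmxA diffmxE col_mxKu col_mxKd subr0 -colE.
  by apply/eqP; rewrite col_realmx_eq0 Ai0.
have zy : supp z \subset supp y.
  apply/subset_suppP => k; case: (split_ordP k) => j -> yj; last by rewrite col_mxEd mxE.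
  by rewrite col_mxEu mxE; case: eqVneq yj => // -> /eqP; rewrite (negbTE yl).
have minker := (supp_minimal_kercone_ker Cy).1 miny.
have [c /matrixP zE] := supp_minimal_ker_multiple minker ADz zy.
have := zE (rshift n i) 0; rewrite col_mxEd !mxE => /esym/eqP.
rewrite mulf_eq0 (negbTE yr) orbF => /eqP c0.
have := zE (lshift n i) 0; rewrite col_mxEu !mxE c0 mul0r eqxx => /eqP.
by rewrite oner_eq0.
Qed.

Lemma supp_minimal_two_sided_tvec y i : supp_minimal (kercone AD) y ->
  y (lshift n i) 0 != 0 -> y (rshift n i) 0 != 0 -> exists2 t, 0 < t & y = t *: tvec R i.
Proof.
move=> miny yl yr.
have ty : supp (tvec R i) \subset supp y.
  apply/subset_suppP => k; case: (split_ordP k) => j -> yj;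
  rewrite ?tvec_lshift ?tvec_rshift; case: eqVneq yj => // -> /eqP;
  by rewrite ?(negbTE yl) ?(negbTE yr).
have [c c0 tE] := supp_minimal_kercone_multiple miny (kercone_tvec i) ty.
have c_pos : 0 < c.
  rewrite lt_def c0 andbT; apply: contraNneq (tvec_neq0 i) => c0'.
  by rewrite tE c0' scale0r.
by exists c^-1; rewrite ?invr_gt0 // tE scalerA mulVf ?scale1r ?gt_eqF.
Qed.

Definition nonzero_cols : {set 'I_n} := [set i | col i A != 0].

Definition CA_generator (y : 'cV[R]_(n + n)) : Prop :=
  Svec A y \/ exists2 i, i \in nonzero_cols & y = tvec R i.

Lemma CA_generator_supp_minimal y : CA_generator y -> supp_minimal (kercone AD) y.
Proof.
case=> [[g [gA ->]]|[i]]; last by rewrite inE => Ai ->; apply: tvec_supp_minimal.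
have ming := circuit_supp_minimal gA; have [ARg _ _] := ming.
apply/(supp_minimal_kercone_ker (kercone_posneg ARg)).
exact/(supp_minimal_posneg ARg).
Qed.

Lemma supp_minimal_CA_generator y : supp_minimal (kercone AD) y ->
  exists w, CA_generator w /\ exists2 t, 0 < t & y = t *: w.
Proof.
move=> miny; have [Cy _ _] := miny.
have [[i [yl yr]]|conformal] :=
  pselect (exists i, y (lshift n i) 0 != 0 /\ y (rshift n i) 0 != 0).
  have Ai := supp_minimal_two_sided_col miny yl yr.
  have [t t0 ->] := supp_minimal_two_sided_tvec miny yl yr.
  by exists (tvec R i); split; [right; exists i; rewrite ?inE | exists t].
have yE : y = posneg (diffmx *m y).
  apply/esym/posneg_diffmx; first exact: Cy.2.
  move=> j; have [|yl] := eqVneq (y (lshift n j) 0) 0; first by left.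
  by right; apply/eqP/negPn/negP => yr; apply: conformal; exists j.
have ARx : AR *m (diffmx *m y) = 0 by rewrite mulmxA; apply: Cy.1.
have [|g [t [gA t0 xE]]] := supp_minimal_circuit (x := diffmx *m y).
  by apply/(supp_minimal_posneg ARx); rewrite -yE; apply/(supp_minimal_kercone_ker Cy).
exists (posneg (intvec R g)); split; first by left; exists g.
by exists t; rewrite // yE xE posnegZ // ltW.
Qed.

End StandardFormCone.

Theorem corollary2 (R : realType) (m n : nat) (A : 'M[rat]_(m, n)) :
  pointed (CA (R:=R) A) /\
  exists I : {set 'I_n},
    (#|I| <= n)%N /\
    let G := fun y : 'cV[R]_(n + n) => Svec A y \/ exists2 i, i \in I & y = tvec R i in
    [/\ cone_generated_by (CA (R:=R) A) G,
        (forall y, G y -> extreme_dir (CA (R:=R) A) y) &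
        (forall d, extreme_dir (CA (R:=R) A) d ->
           exists y, G y /\ exists2 t : R, 0 < t & d = t *: y)].
Proof.
rewrite CA_kercone; split; first by move=> y; apply: kercone_pointed.
exists (nonzero_cols A); split; first by rewrite -[X in (_ <= X)%N]card_ord max_card.
move=> G; split.
- move=> y /(kercone_decomposition (supp_minimal_CA_generator (A := A))) [s [sG ->]].
  have sGj (j : 'I_(size s)) := sG _ (mem_nth 0 (ltn_ord j)).
  exists (size s), (fun j => (nth 0 s j).2), (fun j => (nth 0 s j).1).
  split=> [j|j|]; [exact: (sGj j).2 | exact: (sGj j).1 |].
  by rewrite (big_nth 0) big_mkord.
- by move=> y /CA_generator_supp_minimal /supp_minimal_kerconeP.
- by move=> d /supp_minimal_kerconeP /supp_minimal_CA_generator.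
Qed.
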